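(* Let $G=C_3^3$ with basis $(e_1,e_2,e_3)$, let $e_0=e_1+e_2+e_3$, and let $U=e_1^2e_2^2e_3^2e_0$ (a sequence of length $7$). Then for every $k\in\mathbb N$, \[ \mathsf L(U^{3k})=3k+2\cdot[0,2k]. \] In particular $\max\mathsf L(U^{3k})/\min\mathsf L(U^{3k})=7/3$ for every $k\in\mathbb N$.
   Context: $C_3^3$ denotes the elementary abelian $3$-group of rank $3$. $[a,b]=\{x\in\mathbb Z:a\le x\le b\}$, $y+L=\{y+a:a\in L\}$, $k\cdot L=\{ka:a\in L\}$. For a finite abelian group $G$, a sequence over $G$ is an element of the free abelian monoid $\mathcal F(G)$ with basis $G$ (a finite unordered list of elements of $G$, repetitions allowed; $e_1^2$ means $e_1$ occurring twice, and $U^{3k}$ is the $3k$-fold product of $U$). $\mathcal B(G)$ is the monoid of zero-sum sequences over $G$. An atom is a minimal zero-sum sequence, i.e. a nonempty zero-sum sequence that is not a product of two nonempty zero-sum sequences. For $B\in\mathcal B(G)$, $\mathsf L(B)=\{k\in\mathbb N_0: B \text{ is a product of } k \text{ atoms}\}$. *)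

From mathcomp Require Import all_boot all_order all_algebra.
Set Implicit Arguments. Unset Strict Implicit. Unset Printing Implicit Defensive.
Import GRing.Theory.
Local Open Scope ring_scope.

Definition G := 'rV['Z_3]_3.

(* Sequences over G: elements of the free abelian monoid F(G) are represented
   by lists, considered up to permutation (perm_eq); the monoid product is
   concatenation. *)
Definition zero_sum (S : seq G) : bool := \sum_(g <- S) g == 0.

Definition atom (S : seq G) : Prop :=
  [/\ S != [::], zero_sum S &
      ~ exists T1 T2 : seq G,
          [/\ T1 != [::], T2 != [::], zero_sum T1, zero_sum T2 &
              perm_eq S (T1 ++ T2)]].

Definition in_L (B : seq G) (k : nat) : Prop :=
  exists As : seq (seq G),
    [/\ size As = k, (forall A, A \in As -> atom A) & perm_eq (flatten As) B].

(* Basis e_1, e_2, e_3 (indices 0,1,2) and e_0 = e_1 + e_2 + e_3. *)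
Definition e (i : 'I_3) : G := delta_mx 0 i.
Definition e0 : G := e 0 + e 1 + e 2.

Definition U : seq G := [:: e 0; e 0; e 1; e 1; e 2; e 2; e0].

Definition Upow (n : nat) : seq G := flatten (nseq n U).

From mathcomp Require Import all_boot all_order all_algebra.
From mathcomp Require Import zify.
Set Implicit Arguments.
Unset Strict Implicit.
Unset Printing Implicit Defensive.
Import GRing.Theory.

(* All sequences involved have support in S = {e_1, e_2, e_3, e_0}; such a
   sequence is determined up to permutation by its vector (a, b, c, d) of
   multiplicities, with normal form [seqE a b c d] = e_1^a e_2^b e_3^c e_0^d.
   It is zero-sum iff 3 divides a + d, b + d and c + d, so the atoms over S are
   the minimal nonzero such vectors: V_1 = e_1^3, V_2 = e_2^3, V_3 = e_3^3,
   W = e_0^3, U = e_1^2 e_2^2 e_3^2 e_0 and X = e_1 e_2 e_3 e_0^2.  Each atom A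
   satisfies |A| + 6 v = 3 + 2 v_{e_2}(A), where v = 1 if A = V_2 and v = 0
   otherwise.  Summing over a factorization of U^(3k) into l atoms (a sequence
   of length 21k containing e_2 exactly 6k times) gives 21k + 6j = 3l + 12k,
   where j counts the factors V_2, and 3j <= 6k; hence l = 3k + 2j, j <= 2k.
   Conversely U^u X^x W^w (V_1 V_2 V_3)^v realises each such length for
   suitable u, x, w, v.  The ratio 7/3 is then max/min = 7k/3k. *)

Local Notation e_1 := (e 0%R).
Local Notation e_2 := (e 1%R).
Local Notation e_3 := (e 2%R).

Lemma e_coord i j : e i ord0 j = (j == i)%:R%R.
Proof. by rewrite /e mxE eqxx. Qed.

Lemma e0_coord j : e0 ord0 j = 1%R.
Proof. by rewrite /e0 !mxE; case: j => [[|[|[|j]]] lt_j3] //=; rewrite ?addr0 ?add0r. Qed.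

Lemma e_eq i j : (e i == e j) = (i == j).
Proof.
apply/eqP/eqP => [/(congr1 (fun g : G => g ord0 i))|-> //].
by rewrite !e_coord eqxx; case: eqP.
Qed.

(* e_0 has coordinate 1 at position i + 1, where e i vanishes. *)
Lemma e0_neq_e i : (e0 == e i) = false.
Proof.
apply/negbTE/eqP => /(congr1 (fun g : G => g ord0 (i + 1)%R)).
by rewrite e0_coord e_coord; case: i => [[|[|[|]]] //] lt_i3.
Qed.

Lemma e_neq_e0 i : (e i == e0) = false.
Proof. by rewrite eq_sym e0_neq_e. Qed.

Definition in_supp (g : G) : bool := [|| g == e_1, g == e_2, g == e_3 | g == e0].

Definition seqE (a b c d : nat) : seq G :=
  nseq a e_1 ++ nseq b e_2 ++ nseq c e_3 ++ nseq d e0.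

Definition m1 (T : seq G) : nat := count_mem e_1 T.
Definition m2 (T : seq G) : nat := count_mem e_2 T.
Definition m3 (T : seq G) : nat := count_mem e_3 T.
Definition m0 (T : seq G) : nat := count_mem e0 T.

Lemma count_seqE x a b c d :
  count_mem x (seqE a b c d) =
  (e_1 == x) * a + (e_2 == x) * b + (e_3 == x) * c + (e0 == x) * d.
Proof. by rewrite /seqE !count_cat !count_nseq /= !addnA. Qed.

Lemma m1_seqE a b c d : m1 (seqE a b c d) = a.
Proof. by rewrite /m1 count_seqE !e_eq e0_neq_e /= !mul0n mul1n ?addn0. Qed.
Lemma m2_seqE a b c d : m2 (seqE a b c d) = b.
Proof. by rewrite /m2 count_seqE !e_eq e0_neq_e /= !mul0n mul1n ?addn0. Qed.
Lemma m3_seqE a b c d : m3 (seqE a b c d) = c.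
Proof. by rewrite /m3 count_seqE !e_eq e0_neq_e /= !mul0n mul1n ?addn0. Qed.
Lemma m0_seqE a b c d : m0 (seqE a b c d) = d.
Proof. by rewrite /m0 count_seqE !e_neq_e0 eqxx /= !mul0n mul1n ?addn0. Qed.

(* Only the multiplicity of e_2 enters the length count below. *)
Lemma m2_cat T T' : m2 (T ++ T') = m2 T + m2 T'.
Proof. exact: count_cat. Qed.

Lemma size_seqE a b c d : size (seqE a b c d) = a + b + c + d.
Proof. by rewrite /seqE !size_cat !size_nseq !addnA. Qed.

Lemma supp_seqE a b c d : all in_supp (seqE a b c d).
Proof. by rewrite /seqE !all_cat !all_nseq /in_supp !eqxx /= !orbT. Qed.

Lemma perm_seqE T : all in_supp T -> perm_eq T (seqE (m1 T) (m2 T) (m3 T) (m0 T)).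
Proof.
move=> /allP suppT; apply/allP => x _; apply/eqP; rewrite count_seqE.
have [xS|xNS] := boolP (in_supp x).
  by case/or4P: xS => /eqP->;
     rewrite ?e_eq ?e0_neq_e ?e_neq_e0 eqxx /= !mul0n mul1n ?addn0.
have /count_memPn -> : x \notin T by apply: contra xNS => /suppT.
move: xNS; rewrite /in_supp !(eq_sym x).
by move=> /norP[/negbTE-> /norP[/negbTE-> /norP[/negbTE-> /negbTE->]]].
Qed.

Lemma seqE_cat a b c d a' b' c' d' :
  perm_eq (seqE a b c d ++ seqE a' b' c' d') (seqE (a + a') (b + b') (c + c') (d + d')).
Proof. by apply/allP => x _; apply/eqP; rewrite count_cat !count_seqE !mulnDr; lia. Qed.

Definition zs_vec (a b c d : nat) : bool := [&& 3 %| a + d, 3 %| b + d & 3 %| c + d].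

Lemma row3_eq0 (g : G) :
  (g == 0%R) = [&& g ord0 0%R == 0%R, g ord0 1%R == 0%R & g ord0 2%R == 0%R].
Proof.
apply/eqP/and3P => [->|[/eqP g0 /eqP g1 /eqP g2]]; first by rewrite !mxE.
apply/rowP => -[[|[|[|j]]] lt_j3]; rewrite mxE //; [rewrite -g0|rewrite -g1|rewrite -g2].
all: by congr (g ord0 _); apply: val_inj.
Qed.

Lemma Z3_nat_eq0 n : ((n%:R : 'Z_3) == 0)%R = (3 %| n).
Proof. by rewrite Zp_nat /dvdn -val_eqE. Qed.

Lemma zero_sum_seqE a b c d : zero_sum (seqE a b c d) = zs_vec a b c d.
Proof.
rewrite /zero_sum /seqE !big_cat !big_nseq !iter_addr_0 row3_eq0.
rewrite !mxE !mulmxnE !e_coord !e0_coord /=.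
by rewrite !mul0rn !add0r -!natrD !Z3_nat_eq0.
Qed.

Lemma zero_sum_perm (T T' : seq G) : perm_eq T T' -> zero_sum T = zero_sum T'.
Proof. by move=> pTT'; rewrite /zero_sum (perm_big _ pTT'). Qed.

Lemma size_supp T : all in_supp T -> size T = m1 T + m2 T + m3 T + m0 T.
Proof. by move=> /perm_seqE/perm_size->; rewrite size_seqE. Qed.

Lemma atom_minimal T a b c d : all in_supp T -> atom T ->
  a <= m1 T -> b <= m2 T -> c <= m3 T -> d <= m0 T ->
  zs_vec a b c d -> 0 < a + b + c + d ->
  a + b + c + d = m1 T + m2 T + m3 T + m0 T.
Proof.
move=> suppT [_ zsT noSplit] le_a le_b le_c le_d zs_abcd pos_abcd.
rewrite (zero_sum_perm (perm_seqE suppT)) zero_sum_seqE in zsT.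
have [//|/eqP ne_abcd] := eqVneq (a + b + c + d) (m1 T + m2 T + m3 T + m0 T).
exfalso; apply: noSplit.
exists (seqE a b c d), (seqE (m1 T - a) (m2 T - b) (m3 T - c) (m0 T - d)).
split; rewrite -?size_eq0 ?size_seqE ?zero_sum_seqE; try lia.
- by move: zsT zs_abcd; rewrite /zs_vec => /and3P[? ? ?] /and3P[? ? ?]; apply/and3P; split; lia.
- apply: (perm_trans (perm_seqE suppT)); rewrite perm_sym.
  by apply: (perm_trans (seqE_cat _ _ _ _ _ _ _ _)); rewrite !subnKC.
Qed.

Lemma atom_seqE a b c d : zs_vec a b c d -> 0 < a + b + c + d ->
  (forall a1 b1 c1 d1, a1 <= a -> b1 <= b -> c1 <= c -> d1 <= d ->
     zs_vec a1 b1 c1 d1 -> 0 < a1 + b1 + c1 + d1 -> a1 + b1 + c1 + d1 = a + b + c + d) ->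
  atom (seqE a b c d).
Proof.
move=> zs_abcd pos_abcd minimal; split; rewrite -?size_eq0 ?size_seqE ?zero_sum_seqE; try lia.
case=> T1 [T2 [ne1 ne2 zs1 zs2 perm12]].
have /andP[supp1 supp2] : all in_supp T1 && all in_supp T2.
  by rewrite -all_cat -(perm_all _ perm12) supp_seqE.
have split_mult (m : seq G -> nat) (x : G) : m = count_mem x ->
    m (seqE a b c d) = m T1 + m T2.
  by move=> ->; rewrite (permP perm12) count_cat.
move: (split_mult m1 _ erefl) (split_mult m2 _ erefl)
      (split_mult m3 _ erefl) (split_mult m0 _ erefl).
rewrite m1_seqE m2_seqE m3_seqE m0_seqE => ea eb ec ed.
move: ne1 ne2; rewrite -!size_eq0 !size_supp // => ne1 ne2.
move: zs1; rewrite (zero_sum_perm (perm_seqE supp1)) zero_sum_seqE => zs1.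
have := minimal (m1 T1) (m2 T1) (m3 T1) (m0 T1); rewrite zs1; lia.
Qed.

Definition atom_types : seq (nat * nat * nat * nat) :=
  [:: (3, 0, 0, 0); (0, 3, 0, 0); (0, 0, 3, 0); (0, 0, 0, 3); (2, 2, 2, 1); (1, 1, 1, 2)].

Lemma atom_types_atoms a b c d : (a, b, c, d) \in atom_types -> atom (seqE a b c d).
Proof.
by rewrite !inE !xpair_eqE => type_abcd; apply: atom_seqE; rewrite /zs_vec; lia.
Qed.

(* If some multiplicity is >= 3, the corresponding V_i or W is a zero-sum
   subsequence, hence the whole atom; otherwise the congruences force
   (2,2,2,1) or (1,1,1,2). *)
Lemma atom_classification T : all in_supp T -> atom T ->
  (m1 T, m2 T, m3 T, m0 T) \in atom_types.
Proof.
move=> suppT atomT; have minimal := atom_minimal suppT atomT.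
have [neT zsT _] := atomT.
rewrite (zero_sum_perm (perm_seqE suppT)) zero_sum_seqE in zsT.
rewrite -size_eq0 size_supp // in neT.
move: minimal zsT neT; set a := m1 T; set b := m2 T; set c := m3 T; set d := m0 T.
rewrite /zs_vec => minimal /and3P[za zb zc] neT.
case: (leqP 3 a) => [le3a|lta].
  by have [-> [-> [-> ->]]] : a = 3 /\ b = 0 /\ c = 0 /\ d = 0 by move: (minimal 3 0 0 0); lia.
case: (leqP 3 b) => [le3b|ltb].
  by have [-> [-> [-> ->]]] : a = 0 /\ b = 3 /\ c = 0 /\ d = 0 by move: (minimal 0 3 0 0); lia.
case: (leqP 3 c) => [le3c|ltc].
  by have [-> [-> [-> ->]]] : a = 0 /\ b = 0 /\ c = 3 /\ d = 0 by move: (minimal 0 0 3 0); lia.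
case: (leqP 3 d) => [le3d|ltd].
  by have [-> [-> [-> ->]]] : a = 0 /\ b = 0 /\ c = 0 /\ d = 3 by move: (minimal 0 0 0 3); lia.
by have [[-> [-> [-> ->]]]|[-> [-> [-> ->]]]] :
  (a = 2 /\ b = 2 /\ c = 2 /\ d = 1) \/ (a = 1 /\ b = 1 /\ c = 1 /\ d = 2) by lia.
Qed.

(* The length identity |A| + 6v = 3 + 2 v_{e_2}(A), with v = [A = V_2]. *)
Lemma atom_weight A : all in_supp A -> atom A ->
  exists2 v, 3 * v <= m2 A & size A + 6 * v = 3 + 2 * m2 A.
Proof.
move=> suppA atomA; have := atom_classification suppA atomA.
by rewrite !inE !xpair_eqE size_supp // => type_A; exists (m2 A %/ 3); lia.
Qed.

Lemma factorization_weight (As : seq (seq G)) :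
  (forall A, A \in As -> atom A) -> all in_supp (flatten As) ->
  exists2 j, 3 * j <= m2 (flatten As) &
    size (flatten As) + 6 * j = 3 * size As + 2 * m2 (flatten As).
Proof.
elim: As => [|A As IH] atomsAs /=; first by exists 0.
rewrite all_cat => /andP[suppA suppAs].
have [v v_le weightA] := atom_weight suppA (atomsAs A (mem_head _ _)).
have [j j_le weightAs] :=
  IH (fun B B_As => atomsAs B (@mem_behead _ (A :: As) B B_As)) suppAs.
by exists (v + j); rewrite m2_cat ?size_cat; lia.
Qed.

Lemma in_L_perm B C l : perm_eq B C -> in_L B l -> in_L C l.
Proof.
by move=> pBC [As [sizeAs atomsAs pAsB]]; exists As; split=> //; apply: perm_trans pBC.
Qed.

Lemma in_L_cat B C l l' : in_L B l -> in_L C l' -> in_L (B ++ C) (l + l').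
Proof.
move=> [As [<- atomsAs pAsB]] [Cs [<- atomsCs pCsC]]; exists (As ++ Cs); split.
- by rewrite size_cat.
- by move=> A; rewrite mem_cat => /orP[/atomsAs|/atomsCs].
- by rewrite flatten_cat; apply: perm_cat.
Qed.

Lemma in_L_atom A : atom A -> in_L A 1.
Proof.
by move=> atomA; exists [:: A]; split=> [|A'|] //=; rewrite ?cats0 // inE => /eqP->.
Qed.

Lemma in_L_power B l n : in_L B l -> in_L (flatten (nseq n B)) (n * l).
Proof.
move=> LB; elim: n => [|n IH]; first by exists [::]; split.
by rewrite mulSn; apply: in_L_cat.
Qed.

Lemma seqE_power n a b c d :
  perm_eq (flatten (nseq n (seqE a b c d))) (seqE (n * a) (n * b) (n * c) (n * d)).
Proof.
elim: n => [|n IH] //=; rewrite !mulSn.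
exact: perm_trans (perm_cat (perm_refl _) IH) (seqE_cat _ _ _ _ _ _ _ _).
Qed.

Lemma perm_Upow n a b c d : a = 2 * n -> b = 2 * n -> c = 2 * n -> d = n ->
  perm_eq (seqE a b c d) (Upow n).
Proof.
move=> -> -> -> ->; rewrite perm_sym /Upow (_ : U = seqE 2 2 2 1) //.
by have := seqE_power n 2 2 2 1; rewrite muln1 (mulnC n 2).
Qed.

Lemma in_L_seqE_cat a b c d l a' b' c' d' l' :
  in_L (seqE a b c d) l -> in_L (seqE a' b' c' d') l' ->
  in_L (seqE (a + a') (b + b') (c + c') (d + d')) (l + l').
Proof. by move=> L1 L2; apply: in_L_perm (seqE_cat _ _ _ _ _ _ _ _) (in_L_cat L1 L2). Qed.

Lemma in_L_atom_power n a b c d : (a, b, c, d) \in atom_types ->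
  in_L (seqE (n * a) (n * b) (n * c) (n * d)) n.
Proof.
move=> /atom_types_atoms/in_L_atom/(in_L_power n); rewrite muln1.
exact: in_L_perm (seqE_power _ _ _ _ _).
Qed.

(* The factorization U^u X^x W^w (V_1 V_2 V_3)^v of U^(3k), which exists when the
   multiplicities of e_0 and of e_1, e_2, e_3 match, has length u + x + w + 3v. *)
Lemma in_L_Upow k u x w v : u + 2 * x + 3 * w = 3 * k -> 2 * u + x + 3 * v = 6 * k ->
  in_L (Upow (3 * k)) (u + x + w + 3 * v).
Proof.
move=> count_e0 count_e.
have L := in_L_seqE_cat (@in_L_atom_power u 2 2 2 1 isT)
  (in_L_seqE_cat (@in_L_atom_power x 1 1 1 2 isT)
  (in_L_seqE_cat (@in_L_atom_power w 0 0 0 3 isT)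
  (in_L_seqE_cat (@in_L_atom_power v 3 0 0 0 isT)
  (in_L_seqE_cat (@in_L_atom_power v 0 3 0 0 isT)
                 (@in_L_atom_power v 0 0 3 0 isT))))).
rewrite (_ : u + x + w + 3 * v = u + (x + (w + (v + (v + v))))); last by lia.
by apply: in_L_perm L; apply: perm_Upow; lia.
Qed.

(* L(U^(3k)) = 3k + 2 [0, 2k]; for j >= k one uses u = x = 2k - j, w = j - k, v = j,
   and for j < k one uses u = 3k - 2j, x = v = j, w = 0. *)
Lemma lengths_Upow k l :
  in_L (Upow (3 * k)) l <-> exists2 j, j <= 2 * k & l = 3 * k + 2 * j.
Proof.
split=> [[As [<- atomsAs pAsU]]|[j le_j ->]].
  have pAs : perm_eq (flatten As) (seqE (2 * (3 * k)) (2 * (3 * k)) (2 * (3 * k)) (3 * k)).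
    by apply: perm_trans pAsU _; rewrite perm_sym; exact: perm_Upow.
  have suppAs : all in_supp (flatten As) by rewrite (perm_all _ pAs) supp_seqE.
  have [j le_j weight] := factorization_weight atomsAs suppAs.
  move: le_j weight; rewrite (perm_size pAs) size_seqE /m2 (permP pAs) -/(m2 _) m2_seqE.
  by exists j; lia.
have [le_kj|lt_jk] := leqP k j.
  have := in_L_Upow (u := 2 * k - j) (x := 2 * k - j) (w := j - k) (v := j).
  by rewrite (_ : _ + _ + _ + _ = 3 * k + 2 * j); [apply; lia | lia].
have := in_L_Upow (u := 3 * k - 2 * j) (x := j) (w := 0) (v := j).
by rewrite (_ : _ + _ + _ + _ = 3 * k + 2 * j); [apply; lia | lia].
Qed.

Theorem lemma5p4 (k : nat) (hk : (0 < k)%N) :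
  (forall l : nat,
     in_L (Upow (3 * k)) l <->
     exists2 j : nat, (j <= 2 * k)%N & l = (3 * k + 2 * j)%N)
  /\
  (exists M m : nat,
     [/\ in_L (Upow (3 * k)) M /\ (forall l, in_L (Upow (3 * k)) l -> l <= M)%N,
         in_L (Upow (3 * k)) m /\ (forall l, in_L (Upow (3 * k)) l -> m <= l)%N,
         (0 < m)%N & (3 * M = 7 * m)%N]).
Proof.
split=> [l|]; first exact: lengths_Upow.
exists (7 * k), (3 * k); split; try lia.
- split=> [|l /lengths_Upow [j le_j ->]]; last by lia.
  by apply/lengths_Upow; exists (2 * k); lia.
- split=> [|l /lengths_Upow [j le_j ->]]; last by lia.
  by apply/lengths_Upow; exists 0; lia.
Qed.
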